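(* For $m>0$ consider the soft second-price mechanism on $n$ users with bids $\mathbf b=(b_1,\dots,b_n)$: \[a_i(\mathbf b)=\frac{e^{mb_i}}{\sum_{j=1}^n e^{mb_j}},\qquad p_i(\mathbf b)=b_i-\frac{\sum_{j=1}^n e^{mb_j}}{m e^{mb_i}}\ln\frac{\sum_{j=1}^n e^{mb_j}}{1+\sum_{j\ne i}e^{mb_j}}.\] Suppose the bids are distinct and lie in $(0,1)$, and let $b_{(1)}>b_{(2)}>\cdots>b_{(n)}$ be the bids in decreasing order. Then \[\lim_{m\to+\infty}a_i(\mathbf b)=\begin{cases}1,&b_i=b_{(1)}\\0,&b_i\ne b_{(1)}\end{cases},\qquad \lim_{m\to+\infty}p_i(\mathbf b)=\min\{b_i,b_{(2)}\}.\] *)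

From HB Require Import structures.
From mathcomp Require Import all_boot all_order all_algebra.
From mathcomp Require Import all_classical all_reals all_analysis.
Set Implicit Arguments. Unset Strict Implicit. Unset Printing Implicit Defensive.
Import Order.TTheory GRing.Theory Num.Theory numFieldNormedType.Exports.
Local Open Scope classical_set_scope. Local Open Scope ring_scope.

Definition soft_alloc (R : realType) (n : nat) (m : R) (b : 'I_n -> R) (i : 'I_n) : R :=
  expR (m * b i) / \sum_(j < n) expR (m * b j).

Definition soft_pay (R : realType) (n : nat) (m : R) (b : 'I_n -> R) (i : 'I_n) : R :=
  b i - (\sum_(j < n) expR (m * b j)) / (m * expR (m * b i))
        * ln ((\sum_(j < n) expR (m * b j))
              / (1 + \sum_(j < n | j != i) expR (m * b j))).

(* Order statistics: [bid_stat b k] is b_(k+1), the (k+1)-th largest bid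
   (0-based index k), i.e. the k-th entry of the bids sorted decreasingly. *)
Definition bid_stat (R : realType) (n : nat) (b : 'I_n -> R) (k : nat) : R :=
  nth 0 (sort (fun x y : R => y <= x) [seq b j | j <- enum 'I_n]) k.

From HB Require Import structures.
From mathcomp Require Import all_boot all_order all_algebra.
From mathcomp Require Import all_classical all_reals all_analysis.
From mathcomp Require Import ring lra.
Set Implicit Arguments. Unset Strict Implicit. Unset Printing Implicit Defensive.
Import Order.TTheory GRing.Theory Num.Theory numFieldNormedType.Exports.
Local Open Scope classical_set_scope. Local Open Scope ring_scope.

(* Write x = e^(m b_i) for the weight of bidder i and S = sum_(j != i) e^(m b_j)
   for the weight of the rivals, so that a_i = x / (x + S) and
   p_i = b_i - (x + S) / (m x) * ln ((x + S) / (1 + S)).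
   If i is the top bidder, S / x <= n e^(-m (b_i - b_(2))) tends to 0, while
   ln (x + S) / m -> b_i and ln (1 + S) / m -> b_(2), because x + S and 1 + S
   lie between their largest term and n + 1 times it; hence a_i -> 1 and
   p_i -> b_i - (b_i - b_(2)) = b_(2).
   Otherwise S >= e^(m b_(1)) >= x >= 1, so a_i <= e^(-m (b_(1) - b_i)) -> 0,
   and ln q <= q - 1 bounds the discount subtracted from b_i by 2 / m. *)

Section OrderStatistics.
Variables (R : realType) (n : nat) (b : 'I_n -> R).

Let bids := sort (fun x y : R => y <= x) [seq b j | j <- enum 'I_n].

Let size_bids : size bids = n.
Proof. by rewrite size_sort size_map size_enum_ord. Qed.

Lemma bid_statP k : (k < n)%N -> exists j, b j = bid_stat b k.
Proof.
move=> lt_kn; have : bid_stat b k \in bids by rewrite mem_nth ?size_bids.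
by rewrite mem_sort => /mapP[j _ ->]; exists j.
Qed.

Lemma mem_bid_stat j : exists2 k, (k < n)%N & b j = bid_stat b k.
Proof.
have bj : b j \in bids by rewrite mem_sort map_f ?mem_enum.
exists (index (b j) bids); last by rewrite /bid_stat -/bids nth_index.
by rewrite -[ltnRHS]size_bids index_mem.
Qed.

Lemma bid_stat_antitone k k' :
  (k <= k')%N -> (k' < n)%N -> bid_stat b k' <= bid_stat b k.
Proof.
move=> le_kk' lt_k'n.
have ge_trans : transitive (fun x y : R => y <= x).
  by move=> x y z yx zy; apply: le_trans yx.
apply: (sorted_leq_nth ge_trans _ 0 (sort_sorted _ _)) => //;
  rewrite ?inE ?size_bids ?(leq_ltn_trans le_kk') //.
Qed.

Lemma bid_stat0_ge j : b j <= bid_stat b 0.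
Proof. by have [k lt_kn ->] := mem_bid_stat j; apply: bid_stat_antitone. Qed.

Lemma bid_stat1_ge j : b j != bid_stat b 0 -> b j <= bid_stat b 1.
Proof.
have [[|k] lt_kn ->] := mem_bid_stat j; first by rewrite eqxx.
by move=> _; apply: bid_stat_antitone.
Qed.

Lemma bid_stat1_lt0 : injective b -> (1 < n)%N -> bid_stat b 1 < bid_stat b 0.
Proof.
move=> b_inj lt_1n; rewrite lt_neqAle bid_stat_antitone // andbT.
have uniq_bids : uniq bids by rewrite sort_uniq map_inj_uniq ?enum_uniq.
by rewrite /bid_stat -/bids nth_uniq ?size_bids // ltnW.
Qed.

End OrderStatistics.

Section Asymptotics.
Variable R : realType.

Lemma cvg_pinfty_rate (f : R -> R) (l K : R) :
  (forall m, 1 <= m -> `|f m - l| <= K / m) -> f m @[m --> +oo] --> l.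
Proof.
move=> f_rate; apply/cvgrPdist_le => e e_gt0.
have K_ge0 : 0 <= K by rewrite -[K]divr1; apply: le_trans (f_rate 1 (lexx _)).
near=> m.
have m_ge1 : 1 <= m by near: m; apply: nbhs_pinfty_ge; rewrite num_real.
have Ke_le : K / e <= m by near: m; apply: nbhs_pinfty_ge; rewrite num_real.
rewrite distrC; apply: le_trans (f_rate m m_ge1) _.
by rewrite ler_pdivrMr ?(lt_le_trans ltr01) // mulrC -ler_pdivrMr.
Unshelve. all: by end_near.
Qed.

Lemma expRN_le_inv (y : R) : 0 < y -> expR (- y) <= y^-1.
Proof.
move=> y_gt0; rewrite expRN lef_pV2 ?posrE ?expR_gt0 //.
by apply: le_trans (expR_ge1Dx y); rewrite lerDr.
Qed.

Lemma cvg_ln_div_pinfty (X : R -> R) (u N : R) :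
  (forall m, 1 <= m -> expR (m * u) <= X m <= N * expR (m * u)) ->
  ln (X m) / m @[m --> +oo] --> u.
Proof.
move=> X_bounds; apply: (@cvg_pinfty_rate _ _ (ln N)) => m m_ge1.
have m_gt0 : 0 < m by apply: lt_le_trans m_ge1.
have /andP[X_ge X_le] := X_bounds m m_ge1.
have e_gt0 := expR_gt0 (m * u).
have X_gt0 : 0 < X m by apply: lt_le_trans X_ge.
have N_gt0 : 0 < N by rewrite -(pmulr_lgt0 _ e_gt0) (lt_le_trans X_gt0).
have ln_ge : m * u <= ln (X m) by rewrite -ler_expR lnK.
have ln_le : ln (X m) <= ln N + m * u by rewrite -ler_expR expRD !lnK.
have -> : ln (X m) / m - u = (ln (X m) - m * u) / m by field; rewrite gt_eqF.
rewrite ger0_norm ?divr_ge0 ?subr_ge0 ?(ltW m_gt0) //.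
by rewrite ler_pM2r ?invr_gt0 // lerBlDr.
Qed.

Lemma sum_expR_bounds (I : finType) (P : {pred I}) (F : I -> R) (j : I) (m : R) :
  0 <= m -> P j -> (forall k, P k -> F k <= F j) ->
  expR (m * F j) <= \sum_(k | P k) expR (m * F k) <= #|I|%:R * expR (m * F j).
Proof.
move=> m_ge0 Pj F_le; apply/andP; split.
  by rewrite (bigD1 j) //= lerDl sumr_ge0 // => k _; apply: expR_ge0.
have term_le k : P k -> expR (m * F k) <= expR (m * F j).
  by move=> Pk; rewrite ler_expR ler_wpM2l ?F_le.
apply: le_trans (ler_sum _ term_le) _.
rewrite [leRHS](_ : _ = \sum_(k : I) expR (m * F j)); last first.
  by rewrite sumr_const mulr_natl.
by rewrite [leRHS](bigID P) /= lerDl sumr_ge0 // => k _; apply: expR_ge0.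
Qed.

Lemma ln_ratio_scaled_le (x T m : R) : 0 < m -> 1 <= x <= T ->
  `|(x + T) / (m * x) * ln ((x + T) / (1 + T))| <= 2 / m.
Proof.
move=> m_gt0 /andP[x_ge1 x_leT].
have T1_gt0 : 0 < 1 + T by lra.
have ratio_ge1 : 1 <= (x + T) / (1 + T) by rewrite ler_pdivlMr //; lra.
have ln_le : ln ((x + T) / (1 + T)) <= (x - 1) / (1 + T).
  have -> : (x + T) / (1 + T) = 1 + (x - 1) / (1 + T) by field; lra.
  by apply: le_ln1Dx; rewrite (lt_le_trans _ (divr_ge0 _ (ltW T1_gt0))); lra.
have coef_ge0 : 0 <= (x + T) / (m * x).
  by rewrite divr_ge0 ?mulr_ge0 //; lra.
rewrite ger0_norm; last by rewrite mulr_ge0 ?ln_ge0.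
apply: le_trans (ler_wpM2l coef_ge0 ln_le) _.
have -> : (x + T) / (m * x) * ((x - 1) / (1 + T)) =
          (x + T) * (x - 1) / (x * (1 + T)) / m.
  by field; rewrite !gt_eqF //; lra.
rewrite ler_pM2r ?invr_gt0 // ler_pdivrMr ?mulr_gt0 //; nra.
Qed.

End Asymptotics.

Section SoftSecondPrice.
Variables (R : realType) (n : nat) (b : 'I_n -> R) (i : 'I_n).

Let x m := expR (m * b i).
Let S m := \sum_(j < n | j != i) expR (m * b j).

Let x_gt0 m : 0 < x m. Proof. exact: expR_gt0. Qed.

Let S_ge0 m : 0 <= S m. Proof. by apply: sumr_ge0 => j _; apply: expR_ge0. Qed.

Let soft_allocE m : soft_alloc m b i = x m / (x m + S m).
Proof. by rewrite /soft_alloc (bigD1 i). Qed.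

Let soft_payE m : soft_pay m b i =
  b i - (x m + S m) / (m * x m) * ln ((x m + S m) / (1 + S m)).
Proof. by rewrite /soft_pay (bigD1 i). Qed.

Section TopBidder.
Variables (j1 : 'I_n) (s : R).
Hypotheses (j1_neq_i : j1 != i) (b_j1 : b j1 = s)
  (rivals_le : forall j, j != i -> b j <= s) (s_lt_bi : s < b i) (s_ge0 : 0 <= s).

Let S_bounds (m : R) : 0 <= m -> expR (m * s) <= S m <= n%:R * expR (m * s).
Proof.
move=> m_ge0; rewrite -b_j1 -[n in n%:R]card_ord.
by apply: sum_expR_bounds => // j /rivals_le; rewrite b_j1.
Qed.

Let total_ratio_cvg1 : (x m + S m) / x m @[m --> +oo] --> (1 : R).
Proof.
apply: (@cvg_pinfty_rate _ _ _ (n%:R / (b i - s))) => m m_ge1.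
have m_gt0 : 0 < m by apply: lt_le_trans m_ge1.
have gap_gt0 : 0 < b i - s by rewrite subr_gt0.
have /andP[_ S_le] := S_bounds (ltW m_gt0).
have -> : (x m + S m) / x m - 1 = S m / x m by field; rewrite gt_eqF.
rewrite ger0_norm ?divr_ge0 ?(ltW (x_gt0 m)) //.
apply: le_trans (_ : n%:R * expR (- (m * (b i - s))) <= _).
  by rewrite mulrBr opprB expRB mulrA ler_pM2r ?invr_gt0.
have -> : n%:R / (b i - s) / m = n%:R * (m * (b i - s))^-1.
  by field; rewrite !gt_eqF.
by rewrite ler_wpM2l ?expRN_le_inv ?mulr_gt0.
Qed.

Lemma soft_alloc_top_cvg : soft_alloc m b i @[m --> +oo] --> (1 : R).
Proof.
have allocE m : soft_alloc m b i = ((x m + S m) / x m)^-1 by rewrite soft_allocE invf_div.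
rewrite (funext allocE) -[X in _ --> X]invr1.
exact: cvgV (oner_neq0 R) total_ratio_cvg1.
Qed.

Let ln_total_cvg : ln (x m + S m) / m @[m --> +oo] --> b i.
Proof.
apply: (@cvg_ln_div_pinfty _ _ _ n.+1%:R) => m m_ge1.
have /andP[_ S_le] := S_bounds (le_trans ler01 m_ge1).
have es_le : expR (m * s) <= expR (m * b i).
  by rewrite ler_expR ler_pM2l ?(lt_le_trans ltr01 m_ge1) // ltW.
rewrite lerDl S_ge0 /= -natr1 mulrDl mul1r addrC lerD //.
by apply: le_trans S_le _; rewrite ler_wpM2l.
Qed.

Let ln_one_add_rivals_cvg : ln (1 + S m) / m @[m --> +oo] --> s.
Proof.
apply: (@cvg_ln_div_pinfty _ _ _ n.+1%:R) => m m_ge1.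
have /andP[S_ge S_le] := S_bounds (le_trans ler01 m_ge1).
have es_ge1 : 1 <= expR (m * s).
  by rewrite -expR0 ler_expR mulr_ge0 // (le_trans ler01 m_ge1).
rewrite -natr1 mulrDl mul1r addrC; apply/andP; split; first lra.
by rewrite lerD.
Qed.

Lemma soft_pay_top_cvg : soft_pay m b i @[m --> +oo] --> s.
Proof.
have payE m : soft_pay m b i =
    b i - (x m + S m) / x m * (ln (x m + S m) / m - ln (1 + S m) / m).
  have [xS_gt0 S1_gt0] : 0 < x m + S m /\ 0 < 1 + S m.
    by have := x_gt0 m; have := S_ge0 m; split; lra.
  by rewrite soft_payE ln_div ?posrE // invfM; ring.
rewrite (funext payE) (_ : s = b i - 1 * (b i - s)); last by ring.
apply: cvgB; first exact: cvg_cst.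
apply: cvgM; first exact: total_ratio_cvg1.
exact: cvgB.
Qed.

End TopBidder.

Section LowBidder.
Variable i0 : 'I_n.
Hypotheses (bi_lt : b i < b i0) (bi_gt0 : 0 < b i).

Let S_ge m : expR (m * b i0) <= S m.
Proof.
have i0_neq_i : i0 != i by apply: contraTneq bi_lt => ->; rewrite ltxx.
by rewrite /S (bigD1 i0) //= lerDl sumr_ge0 // => j _; apply: expR_ge0.
Qed.

Lemma soft_alloc_low_cvg : soft_alloc m b i @[m --> +oo] --> (0 : R).
Proof.
apply: (@cvg_pinfty_rate _ _ _ (b i0 - b i)^-1) => m m_ge1.
have m_gt0 : 0 < m by apply: lt_le_trans m_ge1.
have gap_gt0 : 0 < b i0 - b i by rewrite subr_gt0.
have S_gt0 : 0 < S m by apply: lt_le_trans (S_ge m); apply: expR_gt0.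
rewrite soft_allocE subr0 ger0_norm ?divr_ge0 ?addr_ge0 ?(ltW (x_gt0 m)) //.
apply: le_trans (_ : x m / S m <= _).
  by rewrite ler_pM2l ?lef_pV2 ?posrE ?addr_gt0 // lerDr ltW.
apply: le_trans (_ : expR (- (m * (b i0 - b i))) <= _); last first.
  by rewrite -invfM [_ * m]mulrC expRN_le_inv ?mulr_gt0.
by rewrite mulrBr opprB expRB ler_pM2l ?expR_gt0 // lef_pV2 ?posrE ?expR_gt0.
Qed.

Lemma soft_pay_low_cvg : soft_pay m b i @[m --> +oo] --> b i.
Proof.
apply: (@cvg_pinfty_rate _ _ _ 2) => m m_ge1.
have m_gt0 : 0 < m by apply: lt_le_trans m_ge1.
have x_ge1 : 1 <= x m by rewrite -expR0 ler_expR mulr_ge0 // ltW.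
have x_leS : x m <= S m.
  by apply: le_trans (S_ge m); rewrite ler_expR ler_pM2l // ltW.
by rewrite soft_payE addrAC subrr add0r normrN ln_ratio_scaled_le ?x_ge1.
Qed.

End LowBidder.

End SoftSecondPrice.

Theorem mainTheorem6 (R : realType) (n : nat) (b : 'I_n -> R)
  (hn : (2 <= n)%N) (hinj : injective b)
  (hb : forall i, 0 < b i < 1) (i : 'I_n) :
  (soft_alloc m b i @[m --> +oo] --> (if b i == bid_stat b 0 then 1 else 0 : R))
  /\ (soft_pay m b i @[m --> +oo] --> Num.min (b i) (bid_stat b 1)).
Proof.
have b_gt0 j : 0 < b j by case/andP: (hb j).
have [top | low] := eqVneq (b i) (bid_stat b 0).
- have second_lt : bid_stat b 1 < b i by rewrite top bid_stat1_lt0.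
  have [j1 b_j1] := bid_statP b hn.
  have j1_neq_i : j1 != i by apply: contraTneq second_lt => <-; rewrite b_j1 ltxx.
  have rivals_le j : j != i -> b j <= bid_stat b 1.
    by move=> j_neq_i; rewrite bid_stat1_ge // -top (inj_eq hinj).
  rewrite (min_r (ltW second_lt)); split.
    exact: soft_alloc_top_cvg j1_neq_i b_j1 rivals_le second_lt.
  have second_ge0 : 0 <= bid_stat b 1 by rewrite -b_j1 ltW.
  exact: soft_pay_top_cvg j1_neq_i b_j1 rivals_le second_lt second_ge0.
- have [i0 b_i0] := bid_statP b (ltnW hn).
  have low_lt : b i < b i0 by rewrite b_i0 lt_neqAle low bid_stat0_ge.
  rewrite (min_l (bid_stat1_ge low)); split.
    exact: soft_alloc_low_cvg low_lt.
  exact: soft_pay_low_cvg low_lt (b_gt0 i).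
Qed.
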